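(* Let $\mathcal{X},\mathcal{Y}$ be finite sets and $\mu\ge0$. The map $P_{XY}\mapsto R_\mu(P_{XY})$, defined on the set of probability distributions on $\mathcal{X}\times\mathcal{Y}$, is continuous.
   Context: For a distribution $P_{XY}$ on $\mathcal{X}\times\mathcal{Y}$, $\mathcal{R}^*_{\mathtt{WAK}}(P_{XY})$ is the set of pairs $(r_0,r_2)$ for which there exists a conditional distribution $P_{W|XY}$ with finite $\mathcal{W}$, $|\mathcal{W}|\le|\mathcal{X}||\mathcal{Y}|+2$, such that, for $(W,X,Y)\sim P_{XY}P_{W|XY}$, $r_0\ge I(W\wedge X,Y)$, $r_2\ge H(Y\mid W)$ and $I(W\wedge Y\mid X)=0$ (equivalently, $W$ may be taken to depend on $(X,Y)$ only through $X$, with $r_0\ge I(W\wedge X)$). For $\mu\ge0$, $R_\mu(P_{XY}):=\min\{r_0+\mu r_2:(r_0,r_2)\in\mathcal{R}^*_{\mathtt{WAK}}(P_{XY})\}$. Continuity is with respect to the $\ell_1$ (total variation) distance on distributions. *)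

From mathcomp Require Import all_boot all_order all_algebra.
From mathcomp Require Import all_classical all_reals all_analysis.
Set Implicit Arguments. Unset Strict Implicit. Unset Printing Implicit Defensive.
Import Order.TTheory GRing.Theory Num.Theory.
Local Open Scope ring_scope.
Local Open Scope classical_set_scope.

Section Info.
Variable R : realType.

Definition xlnx (x : R) : R := if x == 0 then 0 else x * ln x.

Definition ent (T : finType) (p : T -> R) : R := - \sum_(t : T) xlnx (p t).

Definition is_dist (T : finType) (p : {ffun T -> R}) : Prop :=
  (forall t, 0 <= p t) /\ \sum_(t : T) p t = 1.

Definition is_kernel (A B : finType) (V : {ffun A -> {ffun B -> R}}) : Prop :=
  forall a, is_dist (V a).

Variables (X Y : finType).

Section Joint.
Variable (W : finType) (P : {ffun X * Y -> R}) (V : {ffun X * Y -> {ffun W -> R}}).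

Definition jnt (w : W) (x : X) (y : Y) : R := P (x, y) * V (x, y) w.

Definition H_WXY : R := ent (fun t : W * X * Y => jnt t.1.1 t.1.2 t.2).
Definition H_XY  : R := ent (fun t : X * Y => \sum_(w : W) jnt w t.1 t.2).
Definition H_WX  : R := ent (fun t : W * X => \sum_(y : Y) jnt t.1 t.2 y).
Definition H_WY  : R := ent (fun t : W * Y => \sum_(x : X) jnt t.1 x t.2).
Definition H_W   : R := ent (fun w : W => \sum_(x : X) \sum_(y : Y) jnt w x y).
Definition H_X   : R := ent (fun x : X => \sum_(w : W) \sum_(y : Y) jnt w x y).

Definition I_W_XY : R := H_W + H_XY - H_WXY.
Definition H_Y_given_W : R := H_WY - H_W.
Definition I_W_Y_given_X : R := H_WX + H_XY - H_WXY - H_X.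
End Joint.

Definition WAK_region (P : {ffun X * Y -> R}) : set (R * R) :=
  [set r | exists (n : nat) (V : {ffun X * Y -> {ffun 'I_n -> R}}),
      [/\ (n <= #|X| * #|Y| + 2)%N, is_kernel V,
          I_W_Y_given_X P V = 0,
          I_W_XY P V <= r.1 & H_Y_given_W P V <= r.2]].

(* R_mu(P_XY) = min { r0 + mu r2 : (r0,r2) in R*_WAK(P_XY) } (taken as inf) *)
Definition R_mu (mu : R) (P : {ffun X * Y -> R}) : R :=
  inf [set z | exists r, WAK_region P r /\ z = r.1 + mu * r.2].

Definition l1dist (P Q : {ffun X * Y -> R}) : R :=
  \sum_(t : X * Y) `|P t - Q t|.

End Info.

From mathcomp Require Import all_boot all_order all_algebra.
From mathcomp Require Import all_classical all_reals all_analysis.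
From mathcomp Require Import ring lra zify.
Import Order.TTheory GRing.Theory Num.Theory.
Local Open Scope ring_scope.
Local Open Scope classical_set_scope.
Set Implicit Arguments. Unset Strict Implicit.

(* Under the constraint I(W /\ Y | X) = 0 the joint law of (W, X, Y) factorises
   as P_XY(x, y) P_W|X(w | x), so every point of R*_WAK(P) is reached by a kernel
   that reads x only.  Such a kernel is admissible for every Q as well, and the
   cost I(W /\ X,Y) + mu H(Y | W) is a fixed combination of entropies of marginals
   of the joint law; these marginals move by at most |P - Q|_1, and x ln x is
   uniformly continuous on [0, 1], so the cost moves by an amount that is small
   uniformly in the kernel, because the alphabet of W has at most |X||Y| + 2
   letters.  Hence R_mu(Q) <= R_mu(P) + eps when |P - Q|_1 is small, and
   symmetrically. *)

Section xlnx.
Variable R : realType.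
Implicit Types a b d t x M e : R.

Lemma ln_le_sub1 t : 0 < t -> ln t <= t - 1.
Proof. by move=> t0; have := @le_ln1Dx R (t - 1); rewrite subrKC; apply; lra. Qed.

Lemma ln_lt_sub1 t : 0 < t -> t != 1 -> ln t < t - 1.
Proof.
move=> t0 t1; rewrite -ltr_expR lnK ?posrE //.
by have := @expR_gt1Dx R (t - 1); rewrite subrKC; apply; rewrite subr_eq0.
Qed.

(* [ln 0 = 0] in this library, so the convention [0 ln 0 = 0] is automatic. *)
Lemma xlnxE x : xlnx x = x * ln x.
Proof. by rewrite /xlnx; case: eqP => [->|_]; rewrite ?mul0r. Qed.

Lemma xlnx_le0 x : 0 <= x <= 1 -> xlnx x <= 0.
Proof. by case/andP=> x0 x1; rewrite xlnxE mulr_ge0_le0 // ln_le0. Qed.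

Lemma xlnx_ge_sub1 x : 0 <= x -> x - 1 <= xlnx x.
Proof.
rewrite le0r xlnxE => /predU1P[->|x0]; first by rewrite mul0r; lra.
have : ln x^-1 <= x^-1 - 1 by apply: ln_le_sub1; rewrite invr_gt0.
rewrite lnV ?posrE // => /(ler_wpM2l (ltW x0)); rewrite mulrBr mulfV ?gt_eqF //; lra.
Qed.

Lemma oppr_xlnx_le d M : 0 <= d -> 0 < M -> - xlnx d <= M^-1 + d * M.
Proof.
rewrite le0r xlnxE => /predU1P[->|d0] M0.
  by rewrite !mul0r oppr0 addr0 invr_ge0 ltW.
have dM0 : 0 < d * M by rewrite mulr_gt0.
have : ln (d * M)^-1 <= (d * M)^-1 - 1 by apply: ln_le_sub1; rewrite invr_gt0.
rewrite lnV ?posrE // lnM ?posrE // => h1.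
have h2 := ln_le_sub1 M0.
have := ler_wpM2l (ltW d0) (_ : - ln d <= (d * M)^-1 + M).
rewrite mulrDr invfM mulrA mulfV ?gt_eqF // mul1r mulrN; apply; lra.
Qed.

Lemma xlnx_dist_le a b M : 0 <= a <= b -> b <= 1 -> 0 < M ->
  `|xlnx b - xlnx a| <= (b - a) * (1 + M) + M^-1.
Proof.
case/andP=> a0 ab b1 M0; rewrite !xlnxE.
have -> : b * ln b - a * ln a = (b - a) * ln b + a * (ln b - ln a) by ring.
have lnb0 : ln b <= 0 := ln_le0 b1.
have /andP[la0 la1] : 0 <= a * (ln b - ln a) <= b - a.
  move: a0 ab; rewrite le0r => /predU1P[->|a0] ab; first by rewrite mul0r subr0 lexx.
  have b0 : 0 < b := lt_le_trans a0 ab.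
  apply/andP; split.
    by apply: mulr_ge0; [exact: ltW | rewrite subr_ge0 ler_ln ?posrE].
  rewrite -ln_div ?posrE //.
  apply: le_trans (ler_wpM2l (ltW a0) (ln_le_sub1 (divr_gt0 b0 a0))) _.
  by rewrite mulrBr mulrCA mulfV ?gt_eqF // !mulr1.
have /andP[lb0 lb1] : - (M^-1 + (b - a) * M) <= (b - a) * ln b <= 0.
  rewrite mulr_ge0_le0 ?subr_ge0 // andbT.
  move: ab; rewrite le_eqVlt => /predU1P[->|ab].
    by rewrite subrr !mul0r addr0 oppr_le0 invr_ge0 ltW.
  have ba0 : 0 < b - a by rewrite subr_gt0.
  apply: le_trans (_ : (b - a) * ln (b - a) <= _).
    by rewrite -xlnxE lerNl oppr_xlnx_le ?ltW.
  by rewrite ler_pM2l // ler_ln ?posrE //; lra.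
rewrite ler_norml; apply/andP; split; nra.
Qed.

Definition xlnx_modulus e d := forall a b, 0 <= a <= 1 -> 0 <= b <= 1 ->
  `|a - b| < d -> `|xlnx a - xlnx b| < e.

Lemma xlnx_uniform_continuous e : 0 < e -> exists2 d, 0 < d & xlnx_modulus e d.
Proof.
move=> e0; pose M := 2 / e.
have M0 : 0 < M by rewrite divr_gt0.
have d0 : 0 < e / (2 * (1 + M)) by rewrite divr_gt0 // mulr_gt0 //; lra.
exists (e / (2 * (1 + M))) => // a b /andP[a0 a1] /andP[b0 b1].
wlog ab : a b a0 a1 b0 b1 / a <= b.
  move=> hw; have [|/ltW] := leP a b; first exact: hw.
  by rewrite distrC (distrC (xlnx a)); apply: hw.
rewrite distrC (distrC (xlnx a)) ger0_norm ?subr_ge0 // => hba.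
have := xlnx_dist_le (M := M) (a := a) (b := b); rewrite a0 ab => /(_ isT b1 M0).
have : (b - a) * (1 + M) < e / 2.
  by move: hba; rewrite ltr_pdivlMr ?mulr_gt0 //; lra.
rewrite /M invf_div; lra.
Qed.

End xlnx.

Section entropy.
Variables (R : realType) (T : finType).
Implicit Types p q : T -> R.

Lemma ent_ge0 p : (forall t, 0 <= p t <= 1) -> 0 <= ent p.
Proof. by move=> p01; rewrite oppr_ge0 sumr_le0 // => t _; apply: xlnx_le0. Qed.

Lemma ent_le_card p : (forall t, 0 <= p t) -> ent p <= #|T|%:R.
Proof.
move=> p0; rewrite /ent -sumrN -sumr_const; apply: ler_sum => t _.
by have := p0 t; have := xlnx_ge_sub1 (p0 t); lra.
Qed.

Lemma ent_dist_le p q e d : xlnx_modulus e d ->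
  (forall t, 0 <= p t <= 1) -> (forall t, 0 <= q t <= 1) ->
  (forall t, `|p t - q t| < d) -> `|ent p - ent q| <= #|T|%:R * e.
Proof.
move=> mod_ed p01 q01 pq.
rewrite /ent opprK addrC -sumrB mulr_natl -sumr_const.
apply: le_trans (ler_norm_sum _ _ _) _; apply: ler_sum => t _.
by rewrite distrC ltW // mod_ed.
Qed.

End entropy.

Lemma ler_sum_term (R : numDomainType) (I : finType) (F : I -> R) :
  (forall i, 0 <= F i) -> forall i, F i <= \sum_j F j.
Proof. by move=> F0 i; rewrite (bigD1 i) //= lerDl sumr_ge0. Qed.

Section total_mass.
Variables (R : numDomainType) (W X Y : finType) (E : W -> X -> Y -> R).
Hypothesis E0 : forall w x y, 0 <= E w x y.
Let total := \sum_w \sum_x \sum_y E w x y.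

Let sumY_ge0 w x : 0 <= \sum_y E w x y.
Proof. exact: sumr_ge0. Qed.

Let sumXY_ge0 w : 0 <= \sum_x \sum_y E w x y.
Proof. by apply: sumr_ge0 => x _; apply: sumY_ge0. Qed.

Lemma sumXY_le_total w : \sum_x \sum_y E w x y <= total.
Proof. exact: ler_sum_term sumXY_ge0 w. Qed.

Lemma sumX_le_total w y : \sum_x E w x y <= total.
Proof.
apply: le_trans (sumXY_le_total w); apply: ler_sum => x _.
exact: ler_sum_term (E0 w x) y.
Qed.

Lemma sumW_le_total x y : \sum_w E w x y <= total.
Proof.
apply: ler_sum => w _; apply: le_trans (ler_sum_term (sumY_ge0 w) x).
exact: ler_sum_term (E0 w x) y.
Qed.

Lemma term_le_total w x y : E w x y <= total.
Proof. exact: le_trans (ler_sum_term (fun w => E0 w x y) w) (sumW_le_total x y). Qed.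

End total_mass.

Section joint.
Variables (R : realType) (W X Y : finType).
Variables (P : {ffun X * Y -> R}) (V : {ffun X * Y -> {ffun W -> R}}).

Definition pX x := \sum_w \sum_y jnt P V w x y.
Definition pWX w x := \sum_y jnt P V w x y.
Definition pXY x y := \sum_w jnt P V w x y.

Definition markov_chain :=
  forall w x y, jnt P V w x y * pX x = pWX w x * pXY x y.

Lemma H_WXYE : H_WXY P V = - \sum_w \sum_x \sum_y xlnx (jnt P V w x y).
Proof. by rewrite /H_WXY /ent !pair_bigA. Qed.

Lemma H_WXE : H_WX P V = - \sum_w \sum_x \sum_y jnt P V w x y * ln (pWX w x).
Proof.
by rewrite /H_WX /ent pair_bigA; congr -%R; apply: eq_bigr => -[w x] _; rewrite xlnxE mulr_suml.
Qed.

Lemma H_XYE : H_XY P V = - \sum_w \sum_x \sum_y jnt P V w x y * ln (pXY x y).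
Proof.
rewrite /H_XY /ent exchange_big; under [X in _ = - X]eq_bigr do rewrite exchange_big.
by rewrite pair_bigA; congr -%R; apply: eq_bigr => -[x y] _; rewrite xlnxE mulr_suml.
Qed.

Lemma H_XE : H_X P V = - \sum_w \sum_x \sum_y jnt P V w x y * ln (pX x).
Proof.
rewrite /H_X /ent exchange_big; congr -%R; apply: eq_bigr => x _.
by rewrite xlnxE mulr_suml; apply: eq_bigr => w _; rewrite mulr_suml.
Qed.

Lemma I_W_Y_given_XE : I_W_Y_given_X P V =
  \sum_w \sum_x \sum_y jnt P V w x y *
    (ln (jnt P V w x y) + ln (pX x) - ln (pWX w x) - ln (pXY x y)).
Proof.
rewrite /I_W_Y_given_X H_WXE H_XYE H_WXYE H_XE !pair_bigA -!sumrN -!big_split /=.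
by apply: eq_bigr => -[[w x] y] _ /=; rewrite xlnxE; ring.
Qed.

End joint.

Section gibbs.
Variable R : realType.
Implicit Types p q : R.

Lemma relent_term_ge0 p q : 0 < p -> 0 < q -> 0 <= q - p + p * (ln p - ln q).
Proof.
move=> p0 q0; have := ler_wpM2l (ltW p0) (ln_le_sub1 (divr_gt0 q0 p0)).
rewrite ln_div ?posrE // !mulrBr mulrCA mulfV ?gt_eqF // mulr1; lra.
Qed.

Lemma relent_term_eq0 p q : 0 < p -> 0 < q ->
  q - p + p * (ln p - ln q) = 0 -> p = q.
Proof.
move=> p0 q0 h; have [/divr1_eq -> //|t1] := eqVneq (q / p) 1.
have := ln_lt_sub1 (divr_gt0 q0 p0) t1.
rewrite -(ltr_pM2l p0) ln_div ?posrE // !mulrBr mulrCA mulfV ?gt_eqF // mulr1; lra.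
Qed.

(* With j, a, b, c the joint law and its X-, WX- and XY-marginals at (w, x, y),
   the gaps sum to 1 - 1 + I(W /\ Y | X) (see sum_markov_ratio); each gap is a
   nonnegative relative-entropy term, so I(W /\ Y | X) = 0 forces all of them
   to vanish, which is the Markov factorisation j a = b c. *)
Definition markov_gap (j a b c : R) :=
  b * c / a - j + j * (ln j + ln a - ln b - ln c).

Section markov_gap_pos.
Variables j a b c : R.
Hypotheses (j0 : 0 < j) (jb : j <= b) (jc : j <= c) (ba : b <= a).

Let b0 : 0 < b := lt_le_trans j0 jb.
Let c0 : 0 < c := lt_le_trans j0 jc.
Let a0 : 0 < a := lt_le_trans b0 ba.
Let q0 : 0 < b * c / a := divr_gt0 (mulr_gt0 b0 c0) a0.

Lemma markov_gapE :
  markov_gap j a b c = b * c / a - j + j * (ln j - ln (b * c / a)).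
Proof. by rewrite /markov_gap ln_div ?lnM ?posrE ?mulr_gt0 //; ring. Qed.

Lemma markov_gap_pos_ge0 : 0 <= markov_gap j a b c.
Proof. by rewrite markov_gapE relent_term_ge0. Qed.

Lemma markov_gap_pos_eq0 : markov_gap j a b c = 0 -> j * a = b * c.
Proof.
by rewrite markov_gapE => /relent_term_eq0-> //; rewrite mulfVK ?gt_eqF.
Qed.

End markov_gap_pos.

Lemma markov_gap_ge0 j a b c : 0 <= j <= b -> j <= c -> b <= a ->
  0 <= markov_gap j a b c.
Proof.
case/andP; rewrite le0r => /predU1P[->|j0] jb jc ba; last exact: markov_gap_pos_ge0.
rewrite /markov_gap mul0r subr0 addr0 divr_ge0 ?mulr_ge0 //; exact: le_trans ba.
Qed.

Lemma markov_gap_eq0 j a b c : 0 <= j <= b -> j <= c -> b <= a ->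
  markov_gap j a b c = 0 -> j * a = b * c.
Proof.
case/andP; rewrite le0r => /predU1P[->|j0] jb jc ba; last exact: markov_gap_pos_eq0.
rewrite /markov_gap mul0r subr0 addr0 mul0r => /eqP.
rewrite mulf_eq0 invr_eq0 orbC => /predU1P[a0|/eqP->//].
by rewrite (@le_anti _ _ b 0) ?mul0r // jb -a0 ba.
Qed.

End gibbs.

Section kernelX.
Variables (R : realType) (W X Y : finType).

Definition kernelX (v : {ffun X -> {ffun W -> R}}) :
  {ffun X * Y -> {ffun W -> R}} := [ffun t => v t.1].

Lemma kernelX_kernel v : is_kernel v -> is_kernel (kernelX v).
Proof. by move=> vk t; rewrite ffunE. Qed.

End kernelX.

Section markov.
Variables (R : realType) (W X Y : finType).
Variables (P : {ffun X * Y -> R}) (V : {ffun X * Y -> {ffun W -> R}}).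
Hypotheses (Pd : is_dist P) (Vk : is_kernel V).

Lemma jnt_ge0 w x y : 0 <= jnt P V w x y.
Proof. by rewrite mulr_ge0 // ?Pd.1 ?(Vk _).1. Qed.

Lemma pXYE x y : pXY P V x y = P (x, y).
Proof. by rewrite /pXY /jnt -mulr_sumr (Vk _).2 mulr1. Qed.

Lemma pX_sum_pWX x : pX P V x = \sum_w pWX P V w x.
Proof. by []. Qed.

Lemma pX_sum_pXY x : pX P V x = \sum_y pXY P V x y.
Proof. exact: exchange_big. Qed.

Lemma sum_pX : \sum_x pX P V x = 1.
Proof.
under eq_bigr do rewrite pX_sum_pXY; under eq_bigr do under eq_bigr do rewrite pXYE.
by rewrite pair_bigA -Pd.2; apply: eq_bigr => -[].
Qed.

Lemma sum_jnt : \sum_w \sum_x \sum_y jnt P V w x y = 1.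
Proof. by rewrite exchange_big -sum_pX. Qed.

Lemma jnt_in01 w x y : 0 <= jnt P V w x y <= 1.
Proof. by rewrite jnt_ge0 -sum_jnt term_le_total //; apply: jnt_ge0. Qed.

Lemma sumW_jnt_in01 x y : 0 <= \sum_w jnt P V w x y <= 1.
Proof.
by rewrite sumr_ge0 -?sum_jnt ?sumW_le_total // => *; apply: jnt_ge0.
Qed.

Lemma sumX_jnt_in01 w y : 0 <= \sum_x jnt P V w x y <= 1.
Proof.
by rewrite sumr_ge0 -?sum_jnt ?sumX_le_total // => *; apply: jnt_ge0.
Qed.

Lemma sumXY_jnt_in01 w : 0 <= \sum_x \sum_y jnt P V w x y <= 1.
Proof.
rewrite -sum_jnt sumXY_le_total ?andbT => *; last exact: jnt_ge0.
by apply: sumr_ge0 => x _; apply: sumr_ge0 => y _; apply: jnt_ge0.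
Qed.

Lemma pWX_ge0 w x : 0 <= pWX P V w x.
Proof. by apply: sumr_ge0 => y _; apply: jnt_ge0. Qed.

Lemma jnt_le_pWX w x y : jnt P V w x y <= pWX P V w x.
Proof. exact: ler_sum_term (jnt_ge0 w x) y. Qed.

Lemma jnt_le_pXY w x y : jnt P V w x y <= pXY P V x y.
Proof. exact: ler_sum_term (fun w => jnt_ge0 w x y) w. Qed.

Lemma pWX_le_pX w x : pWX P V w x <= pX P V x.
Proof. exact: ler_sum_term (pWX_ge0^~ x) w. Qed.

Lemma pXY_le_pX x y : pXY P V x y <= pX P V x.
Proof.
rewrite pX_sum_pXY; apply: ler_sum_term y => y'.
by apply: sumr_ge0 => w _; apply: jnt_ge0.
Qed.

Lemma sum_markov_ratio :
  \sum_w \sum_x \sum_y pWX P V w x * pXY P V x y / pX P V x = 1.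
Proof.
rewrite exchange_big -sum_pX; apply: eq_bigr => x _.
transitivity ((\sum_w pWX P V w x) * (\sum_y pXY P V x y) / pX P V x).
  rewrite !mulr_suml; apply: eq_bigr => w _.
  by rewrite mulr_sumr mulr_suml.
rewrite -pX_sum_pWX -pX_sum_pXY.
by have [->|x0] := eqVneq (pX P V x) 0; rewrite ?mul0r ?mulfK.
Qed.

Lemma markov_chain_I_W_Y_given_X :
  markov_chain P V -> I_W_Y_given_X P V = 0.
Proof.
move=> factor; rewrite I_W_Y_given_XE.
apply: big1 => w _; apply: big1 => x _; apply: big1 => y _.
have [->|j0] := eqVneq (jnt P V w x y) 0; first by rewrite mul0r.
have jp : 0 < jnt P V w x y by rewrite lt0r j0 jnt_ge0.
have bp : 0 < pWX P V w x := lt_le_trans jp (jnt_le_pWX w x y).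
have cp : 0 < pXY P V x y := lt_le_trans jp (jnt_le_pXY w x y).
have ap : 0 < pX P V x := lt_le_trans bp (pWX_le_pX w x).
have : ln (jnt P V w x y * pX P V x) = ln (pWX P V w x * pXY P V x y).
  by rewrite factor.
by rewrite (lnM jp ap) (lnM bp cp) => ->; ring.
Qed.

Lemma I_W_Y_given_X_markov_chain :
  I_W_Y_given_X P V = 0 -> markov_chain P V.
Proof.
move=> I0 w x y.
pose g w x y := markov_gap (jnt P V w x y) (pX P V x) (pWX P V w x) (pXY P V x y).
have hyps w' x' y' : [/\ 0 <= jnt P V w' x' y' <= pWX P V w' x',
    jnt P V w' x' y' <= pXY P V x' y' & pWX P V w' x' <= pX P V x'].
  by rewrite jnt_ge0 jnt_le_pWX jnt_le_pXY pWX_le_pX.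
have g_ge0 w' x' y' : 0 <= g w' x' y'.
  by case: (hyps w' x' y'); apply: markov_gap_ge0.
have sum_g : \sum_w \sum_x \sum_y g w x y = 0.
  transitivity (\sum_w \sum_x \sum_y pWX P V w x * pXY P V x y / pX P V x
      - \sum_w \sum_x \sum_y jnt P V w x y + I_W_Y_given_X P V).
    by rewrite I_W_Y_given_XE !pair_bigA -sumrB -big_split.
  by rewrite sum_markov_ratio sum_jnt I0 subrr addr0.
move: sum_g; rewrite !pair_bigA.
move=> /(psumr_eq0P (fun t _ => g_ge0 _ _ _))/(_ (w, x, y) isT).
by case: (hyps w x y); apply: markov_gap_eq0.
Qed.

(* Where P_X(x) = 0 the row is irrelevant but must still be a distribution;
   V (x, y0) is one. *)
Definition kernelWX (y0 : Y) : {ffun X -> {ffun W -> R}} :=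
  [ffun x => [ffun w =>
    if pX P V x == 0 then V (x, y0) w else pWX P V w x / pX P V x]].

Lemma kernelWX_kernel y0 : is_kernel (kernelWX y0).
Proof.
move=> x; rewrite ffunE; have [x0|x0] := eqVneq (pX P V x) 0.
  split=> [w|]; last under eq_bigr do rewrite ffunE.
    by rewrite ffunE; apply: (Vk _).1.
  exact: (Vk _).2.
split=> [w|]; last under eq_bigr do rewrite ffunE.
  by rewrite ffunE divr_ge0 ?pWX_ge0 // (le_trans (pWX_ge0 w x) (pWX_le_pX w x)).
by rewrite -mulr_suml -pX_sum_pWX mulfV.
Qed.

Lemma jnt_kernelWX y0 : I_W_Y_given_X P V = 0 ->
  jnt P (kernelX Y (kernelWX y0)) = jnt P V.
Proof.
move/I_W_Y_given_X_markov_chain => factor.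
apply: funext => w; apply: funext => x; apply: funext => y.
rewrite {1}/jnt !ffunE /= -{1}(pXYE x y); have [x0|x0] := eqVneq (pX P V x) 0.
  have pXY0 : pXY P V x y = 0.
    by apply/le_anti; rewrite -{1}x0 pXY_le_pX sumr_ge0 // => w' _; apply: jnt_ge0.
  by rewrite pXY0 mul0r /jnt -(pXYE x y) pXY0 mul0r.
by rewrite mulrA [pXY _ _ _ _ * _]mulrC -factor mulfK.
Qed.

End markov.

Lemma I_W_Y_given_X_kernelX (R : realType) (W X Y : finType)
    (P : {ffun X * Y -> R}) (v : {ffun X -> {ffun W -> R}}) :
  is_dist P -> is_kernel v -> I_W_Y_given_X P (kernelX Y v) = 0.
Proof.
move=> Pd vk; have Vk := kernelX_kernel (Y := Y) vk.
apply: (markov_chain_I_W_Y_given_X Pd Vk) => w x y.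
have jntE w' x' y' : jnt P (kernelX Y v) w' x' y' = P (x', y') * v x' w'.
  by rewrite /jnt ffunE.
have -> : pWX P (kernelX Y v) w x = (\sum_y P (x, y)) * v x w.
  by rewrite mulr_suml; apply: eq_bigr => y' _; rewrite jntE.
rewrite pX_sum_pXY jntE (pXYE P Vk); under eq_bigr do rewrite (pXYE P Vk).
by ring.
Qed.

Lemma ler_dist_sum (R : numDomainType) (I : finType) (F G : I -> R) :
  `|\sum_i F i - \sum_i G i| <= \sum_i `|F i - G i|.
Proof. by rewrite -sumrB ler_norm_sum. Qed.

Section cost.
Variables (R : realType) (W X Y : finType).

Definition wak_cost (mu : R) (P : {ffun X * Y -> R})
    (V : {ffun X * Y -> {ffun W -> R}}) :=
  I_W_XY P V + mu * H_Y_given_W P V.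

Lemma wak_cost_jnt mu P V V' :
  jnt P V = jnt P V' -> wak_cost mu P V = wak_cost mu P V'.
Proof. by rewrite /wak_cost /I_W_XY /H_Y_given_W /H_W /H_XY /H_WXY /H_WY => ->. Qed.

Lemma wak_cost_ge (mu : R) P V : 0 <= mu -> is_dist P -> is_kernel V ->
  - ((1 + mu) * ((#|W| + 1) * (#|X| + 1) * (#|Y| + 1))%:R) <= wak_cost mu P V.
Proof.
move=> mu0 Pd Vk; set K := (_ * _)%N.
have H_W0 : 0 <= H_W P V by apply: ent_ge0 => w; apply: sumXY_jnt_in01.
have H_XY0 : 0 <= H_XY P V by apply: ent_ge0 => -[x y]; apply: sumW_jnt_in01.
have H_WY0 : 0 <= H_WY P V by apply: ent_ge0 => -[w y]; apply: sumX_jnt_in01.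
have H_WXYK : H_WXY P V <= K%:R.
  apply: le_trans (ent_le_card _) _ => [[[w x] y]|]; first exact: jnt_ge0.
  by rewrite ler_nat !card_prod; nia.
have H_WK : H_W P V <= K%:R.
  apply: le_trans (ent_le_card _) _ => [w|]; last by rewrite ler_nat; nia.
  by case/andP: (sumXY_jnt_in01 Pd Vk w).
have := ler_wpM2l mu0 H_WK; have := mulr_ge0 mu0 H_WY0.
rewrite /wak_cost /I_W_XY /H_Y_given_W; lra.
Qed.

End cost.

Section continuity.
Variables (R : realType) (W X Y : finType).
Variables (P Q : {ffun X * Y -> R}) (V : {ffun X * Y -> {ffun W -> R}}).
Hypotheses (Pd : is_dist P) (Qd : is_dist Q) (Vk : is_kernel V).
Variables (e d : R).
Hypotheses (mod_ed : xlnx_modulus e d) (PQd : l1dist P Q < d).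

Let D w x y := `|P (x, y) - Q (x, y)| * V (x, y) w.

Let D_ge0 w x y : 0 <= D w x y.
Proof. by rewrite mulr_ge0 ?(Vk _).1. Qed.

Let sum_D : \sum_w \sum_x \sum_y D w x y = l1dist P Q.
Proof.
rewrite exchange_big; under eq_bigr do rewrite exchange_big.
by rewrite pair_bigA; apply: eq_bigr => -[x y] _; rewrite -mulr_sumr (Vk _).2 mulr1.
Qed.

Let jnt_dist_le w x y : `|jnt Q V w x y - jnt P V w x y| <= D w x y.
Proof. by rewrite -mulrBl normrM (ger0_norm ((Vk _).1 _)) distrC. Qed.

Lemma H_WXY_close : `|H_WXY Q V - H_WXY P V| <= #|{: W * X * Y}|%:R * e.
Proof.
apply: ent_dist_le mod_ed _ _ _ => [[[w x] y]|[[w x] y]|[[w x] y]] /=.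
- exact: jnt_in01.
- exact: jnt_in01.
- apply: le_lt_trans PQd; rewrite -sum_D.
  exact: le_trans (jnt_dist_le w x y) (term_le_total D_ge0 w x y).
Qed.

Lemma H_XY_close : `|H_XY Q V - H_XY P V| <= #|{: X * Y}|%:R * e.
Proof.
apply: ent_dist_le mod_ed _ _ _ => [[x y]|[x y]|[x y]] /=.
- exact: sumW_jnt_in01.
- exact: sumW_jnt_in01.
- apply: le_lt_trans PQd; rewrite -sum_D; apply: le_trans (ler_dist_sum _ _) _.
  by apply: le_trans (sumW_le_total D_ge0 x y); apply: ler_sum => w _.
Qed.

Lemma H_WY_close : `|H_WY Q V - H_WY P V| <= #|{: W * Y}|%:R * e.
Proof.
apply: ent_dist_le mod_ed _ _ _ => [[w y]|[w y]|[w y]] /=.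
- exact: sumX_jnt_in01.
- exact: sumX_jnt_in01.
- apply: le_lt_trans PQd; rewrite -sum_D; apply: le_trans (ler_dist_sum _ _) _.
  by apply: le_trans (sumX_le_total D_ge0 w y); apply: ler_sum => x _.
Qed.

Lemma H_W_close : `|H_W Q V - H_W P V| <= #|W|%:R * e.
Proof.
apply: ent_dist_le mod_ed _ _ _ => w /=.
- exact: sumXY_jnt_in01.
- exact: sumXY_jnt_in01.
- apply: le_lt_trans PQd; rewrite -sum_D; apply: le_trans (ler_dist_sum _ _) _.
  apply: le_trans (sumXY_le_total D_ge0 w); apply: ler_sum => x _.
  by apply: le_trans (ler_dist_sum _ _) _; apply: ler_sum => y _.
Qed.

Lemma wak_cost_close (mu : R) : 0 <= mu ->
  `|wak_cost mu Q V - wak_cost mu P V|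
    <= (3 + 2 * mu) * (((#|W| + 1) * (#|X| + 1) * (#|Y| + 1))%:R * e).
Proof.
move=> mu0; set K := (_ * _)%N.
have e0 : 0 <= e.
  have d0 : 0 < d by apply: le_lt_trans PQd; rewrite sumr_ge0.
  have := mod_ed (a := 0) (b := 0); rewrite lexx ler01 !subrr normr0.
  by move=> /(_ isT isT d0) /ltW.
have to_K (T : finType) (c : R) : (#|T| <= K)%N -> `|c| <= #|T|%:R * e -> `|c| <= K%:R * e.
  by move=> TK /le_trans; apply; rewrite ler_wpM2r // ler_nat.
have [cWXY cXY cWY cW] : [/\ #|{: W * X * Y}| <= K, #|{: X * Y}| <= K,
    #|{: W * Y}| <= K & #|W| <= K]%N by rewrite /K !card_prod; split; nia.
move: (to_K _ _ cWXY H_WXY_close) (to_K _ _ cXY H_XY_close).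
move: (to_K _ _ cWY H_WY_close) (to_K _ _ cW H_W_close).
rewrite !ler_norml => /andP[W1 W2] /andP[WY1 WY2] /andP[XY1 XY2] /andP[WXY1 WXY2].
have := ler_wpM2l mu0 W1; have := ler_wpM2l mu0 W2.
have := ler_wpM2l mu0 WY1; have := ler_wpM2l mu0 WY2.
rewrite /wak_cost /I_W_XY /H_Y_given_W => *; apply/andP; split; lra.
Qed.

End continuity.

Section R_mu_continuity.
Variables (R : realType) (X Y : finType).
Implicit Types (mu : R) (P Q : {ffun X * Y -> R}).

Definition wak_values mu P : set R :=
  [set z | exists r, WAK_region P r /\ z = r.1 + mu * r.2].

Lemma R_muE mu P : R_mu mu P = inf (wak_values mu P).
Proof. by []. Qed.

Let N := (#|X| * #|Y| + 2)%N.
Let Kmax := ((N + 1) * (#|X| + 1) * (#|Y| + 1))%N.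

Let card_le_Kmax n : (n <= N)%N -> ((n + 1) * (#|X| + 1) * (#|Y| + 1) <= Kmax)%N.
Proof. by rewrite /Kmax; nia. Qed.

Lemma wak_values_kernelX mu P n (v : {ffun X -> {ffun 'I_n -> R}}) :
  is_dist P -> is_kernel v -> (n <= N)%N ->
  wak_values mu P (wak_cost mu P (kernelX Y v)).
Proof.
move=> Pd vk nN; exists (I_W_XY P (kernelX Y v), H_Y_given_W P (kernelX Y v)).
split=> //; exists n, (kernelX Y v); split=> //; first exact: kernelX_kernel.
exact: I_W_Y_given_X_kernelX.
Qed.

Lemma wak_values_neq0 mu P : is_dist P -> wak_values mu P !=set0.
Proof.
move=> Pd; pose v : {ffun X -> {ffun 'I_1 -> R}} := [ffun=> [ffun=> 1]].
have vk : is_kernel v by move=> x; split=> [w|]; rewrite ?big_ord1 !ffunE.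
by eexists; apply: wak_values_kernelX Pd vk _; rewrite /N; lia.
Qed.

Lemma wak_cost_le mu P n (V : {ffun X * Y -> {ffun 'I_n -> R}}) r : 0 <= mu ->
  I_W_XY P V <= r.1 -> H_Y_given_W P V <= r.2 -> wak_cost mu P V <= r.1 + mu * r.2.
Proof. by move=> mu0 r1 /(ler_wpM2l mu0); rewrite /wak_cost; lra. Qed.

Lemma wak_values_ge mu P : 0 <= mu -> is_dist P ->
  lbound (wak_values mu P) (- ((1 + mu) * Kmax%:R)).
Proof.
move=> mu0 Pd _ [r [[n [V [nN Vk _ r1 r2]]] ->]].
apply: le_trans (wak_cost_le mu0 r1 r2); apply: le_trans (wak_cost_ge mu0 Pd Vk).
rewrite lerN2 ler_wpM2l ?ler_nat ?card_ord ?card_le_Kmax //; lra.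
Qed.

Lemma R_mu_le_kernelX mu Q n (v : {ffun X -> {ffun 'I_n -> R}}) :
  0 <= mu -> is_dist Q -> is_kernel v -> (n <= N)%N ->
  R_mu mu Q <= wak_cost mu Q (kernelX Y v).
Proof.
move=> mu0 Qd vk nN; apply: ge_inf (wak_values_kernelX mu Qd vk nN).
by exists (- ((1 + mu) * Kmax%:R)); apply: wak_values_ge.
Qed.

Lemma R_mu_le_add_l1dist mu (eps : R) : 0 <= mu -> 0 < eps ->
  exists2 d, 0 < d & forall P Q, is_dist P -> is_dist Q ->
    l1dist P Q < d -> R_mu mu Q <= R_mu mu P + eps.
Proof.
move=> mu0 eps0; pose c := (3 + 2 * mu) * Kmax%:R.
have c0 : 0 < c by rewrite mulr_gt0 //; [lra | rewrite ltr0n /Kmax; lia].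
have [d d0 mod_ed] := xlnx_uniform_continuous (divr_gt0 eps0 c0).
exists d => // P Q Pd Qd PQd.
have [[_ y0] _] : exists t : X * Y, true.
  case: (pickP (fun _ : X * Y => true)) => [t _|none]; first by exists t.
  by move: Pd.2; rewrite big_pred0 // => /eqP; rewrite eq_sym oner_eq0.
rewrite R_muE -lerBlDr; apply: lb_le_inf (wak_values_neq0 mu Pd) _.
move=> _ [r [[n [V [nN Vk I0 r1 r2]]] ->]].
have Vk' := kernelWX_kernel Pd Vk y0.
have costP := wak_cost_jnt mu (jnt_kernelWX Pd Vk y0 I0).
have costQ := wak_cost_close Pd Qd (kernelX_kernel Vk') mod_ed PQd mu0.
have RQ := R_mu_le_kernelX mu0 Qd Vk' nN.
have err : (3 + 2 * mu) * (((#|'I_n| + 1) * (#|X| + 1) * (#|Y| + 1))%:R * (eps / c))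
    <= eps.
  apply: le_trans (_ : c * (eps / c) <= eps); last by rewrite mulrCA mulfV ?gt_eqF ?mulr1.
  rewrite /c -mulrA; apply: ler_wpM2l; first lra.
  apply: ler_wpM2r; first by rewrite divr_ge0 ?ltW.
  by rewrite ler_nat card_ord card_le_Kmax.
have := wak_cost_le mu0 r1 r2; move: costQ; rewrite ler_norml => /andP[_]; lra.
Qed.

End R_mu_continuity.

Lemma l1distC (R : realType) (X Y : finType) (P Q : {ffun X * Y -> R}) :
  l1dist P Q = l1dist Q P.
Proof. by apply: eq_bigr => t _; rewrite distrC. Qed.

Unset Implicit Arguments.

Theorem lemma4 (R : realType) (X Y : finType) (mu : R) :
  0 <= mu ->
  forall P : {ffun X * Y -> R}, is_dist P ->
  forall eps : R, 0 < eps ->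
  exists2 delta : R, 0 < delta &
    forall Q : {ffun X * Y -> R}, is_dist Q ->
      l1dist P Q < delta -> `|R_mu mu Q - R_mu mu P| < eps.
Proof.
move=> mu0 P Pd eps eps0.
have [d d0 R_mu_le] := R_mu_le_add_l1dist X Y mu0 (divr_gt0 eps0 (ltr0Sn _ 1)).
exists d => // Q Qd PQd.
have QP := R_mu_le P Q Pd Qd PQd.
have PQ : R_mu mu P <= R_mu mu Q + eps / 2.
  by apply: R_mu_le; rewrite // l1distC.
rewrite ltr_norml; apply/andP; split; lra.
Qed.
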